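(* Let $1\le b<\frac{n}{2}-1$ and let $T$ be a tree attaining the maximum value of $M_2$ over $\mathcal{CT}^*_{n,b}$. Then $T$ contains no internal path of length greater than $1$.
   Context: A chemical tree is a tree with maximum degree at most $4$. A branching vertex is a vertex of degree greater than $2$. An internal path is a path $u_0\cdots u_r$ ($r\ge1$) whose end vertices are branching and whose internal vertices all have degree $2$; its length is $r$. $\mathcal{CT}^*_{n,b}$ is the class of all $n$-vertex chemical trees with exactly $b$ branching vertices. $M_2(G)=\sum_{uv\in E(G)}d_ud_v$, where $d_v$ is the degree of $v$. *)

From mathcomp Require Import all_boot.
Set Implicit Arguments. Unset Strict Implicit. Unset Printing Implicit Defensive.

Definition simple_graph (n : nat) (g : rel 'I_n) : Prop :=
  symmetric g /\ irreflexive g.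

Definition deg (n : nat) (g : rel 'I_n) (v : 'I_n) : nat := #|[set u | g v u]|.

Definition edge_set (n : nat) (g : rel 'I_n) : {set 'I_n * 'I_n} :=
  [set e : 'I_n * 'I_n | (e.1 < e.2)%N && g e.1 e.2].

Definition is_tree (n : nat) (g : rel 'I_n) : Prop :=
  [/\ simple_graph g, (forall u v : 'I_n, connect g u v) & #|edge_set g| = n.-1].

Definition chemical (n : nat) (g : rel 'I_n) : Prop :=
  forall v : 'I_n, deg g v <= 4.

Definition branching (n : nat) (g : rel 'I_n) (v : 'I_n) : bool := 2 < deg g v.

Definition num_branching (n : nat) (g : rel 'I_n) : nat :=
  #|[set v | branching g v]|.

Definition in_CTstar (n b : nat) (g : rel 'I_n) : Prop :=
  [/\ is_tree g, chemical g & num_branching g = b].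

Definition M2 (n : nat) (g : rel 'I_n) : nat :=
  \sum_(e in edge_set g) deg g e.1 * deg g e.2.

(* Internal path u0 u1 ... ur, represented by u0 = x and p = [:: u1; ...; ur]:
   r = size p >= 1, consecutive vertices adjacent, vertices distinct,
   end vertices branching, internal vertices u1..u_{r-1} of degree 2.
   Its length is r = size p. *)
Definition internal_path (n : nat) (g : rel 'I_n) (x : 'I_n) (p : seq 'I_n) : Prop :=
  [/\ (1 <= size p)%N, path g x p, uniq (x :: p),
      branching g x && branching g (last x p)
    & all (fun v => deg g v == 2) (take (size p).-1 p)].

From mathcomp Require Import all_boot zify.
Set Implicit Arguments. Unset Strict Implicit. Unset Printing Implicit Defensive.

(* Let x u y ... be an internal path of length at least 2, so that u has degree 2.
   Suppressing u (replacing the edges xu, uy by xy) and then subdividing a pendant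
   edge wl with u gives a tree with the same degrees, hence again in CT*_{n,b},
   whose M2 exceeds that of the original by (d_x - 2)(d_y - 2) + d_w - 2 >= 0.
   If the path has length 2 then y is branching and the gain is positive;
   otherwise the new tree has the internal path x y ... , one edge shorter, and
   the argument is repeated. *)

Lemma connect_avoid_vertex (T : finType) (g g' : rel T) (v z : T) :
  {in predC1 v &, subrel g g'} -> connect g z v -> z != v ->
  exists2 y, g y v & connect g' z y.
Proof.
move=> + /connectP[p gp vE]; rewrite {v}vE; case: (shortenP gp) => {gp} p' gp up _.
case/lastP: p' gp up => [|q y] /=; first by rewrite eqxx.
rewrite rcons_path last_rcons => /andP[gq gqy] /andP[_].
rewrite rcons_uniq => /andP[yq _] gg' zy; exists (last z q) => //.
apply/connectP; exists q => //; apply: (sub_in_path (P := predC1 y) gg' _ gq).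
apply/allP => a /predU1P[->|aq] //=.
by apply: contraNneq yq => <-.
Qed.

Section Graphs.

Variable n : nat.
Implicit Types (g : rel 'I_n) (a b u v w x y z : 'I_n) (F : 'I_n -> 'I_n -> nat).

Definition joins x y a b : bool := ((a == x) && (b == y)) || ((a == y) && (b == x)).
Definition add_edge g x y : rel 'I_n := fun a b => g a b || joins x y a b.
Definition del_edge g x y : rel 'I_n := fun a b => g a b && ~~ joins x y a b.
Definition edge_of x y : 'I_n * 'I_n := if (x < y)%N then (x, y) else (y, x).
Definition edge_weight F g := \sum_(e in edge_set g) F e.1 e.2.

Lemma joinsC x y a b : joins x y b a = joins x y a b.
Proof. by rewrite /joins orbC andbC [(b == x) && _]andbC. Qed.

Lemma joins_irr x y a : x != y -> joins x y a a = false.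
Proof. by move=> xy; rewrite /joins; apply: contraNF xy => /orP[]/andP[/eqP<- /eqP<-]. Qed.

Lemma joins_rel g x y a b : symmetric g -> joins x y a b -> g a b = g x y.
Proof. by move=> gs /orP[]/andP[/eqP-> /eqP->]; rewrite // gs. Qed.

Lemma sum_joins x y a : x != y -> \sum_b (joins x y a b : nat) = (a == x) + (a == y).
Proof.
move=> xy; have sum_eq1 c : \sum_b (b == c : nat) = 1.
  by rewrite (bigD1 c) //= eqxx big1 // => b /negbTE->.
rewrite /joins; have [->|_] := eqVneq a x.
  by rewrite (negbTE xy) /=; under eq_bigr do rewrite orbF; exact: sum_eq1.
by case: eqP => [_|_] /=; [exact: sum_eq1 | rewrite big1].
Qed.

Lemma deg_sum g v : deg g v = \sum_u (g v u : nat).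
Proof. by rewrite /deg -sum1_card big_mkcond; apply: eq_bigr => u _; rewrite inE; case: g. Qed.

Lemma deg_add_edge g x y v : symmetric g -> x != y -> ~~ g x y ->
  deg (add_edge g x y) v = deg g v + (v == x) + (v == y).
Proof.
move=> gs xy nxy; rewrite !deg_sum -addnA -sum_joins // -big_split.
apply: eq_bigr => u _; rewrite /add_edge.
by case J: (joins x y v u); rewrite /= ?(joins_rel gs J) ?(negbTE nxy) ?orbF ?addn0.
Qed.

Lemma deg_del_edge g x y v : symmetric g -> x != y -> g x y ->
  deg (del_edge g x y) v + (v == x) + (v == y) = deg g v.
Proof.
move=> gs xy gxy; rewrite !deg_sum -addnA -sum_joins // -big_split.
apply: eq_bigr => u _; rewrite /del_edge.
by case J: (joins x y v u); rewrite /= ?(joins_rel gs J) ?gxy ?andbT ?andbF ?addn0.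
Qed.

Lemma edge_ofE x y a b : x != y -> ((a, b) == edge_of x y) = (a < b)%N && joins x y a b.
Proof.
rewrite /edge_of /joins -!val_eqE; case: ifP; rewrite xpair_eqE -!val_eqE /=; lia.
Qed.

Lemma edge_ofP a b c d : edge_of a b = edge_of c d -> (a = c /\ b = d) \/ (a = d /\ b = c).
Proof. by rewrite /edge_of; do 2!case: ifP => _; case=> -> ->; auto. Qed.

Lemma edge_of_in g x y : symmetric g -> x != y -> (edge_of x y \in edge_set g) = g x y.
Proof.
move=> gs xy; rewrite inE /edge_of; case: ifP => //= lt; rewrite gs andb_idl //.
by move: xy; rewrite -val_eqE /=; lia.
Qed.

Lemma edge_set_add g x y : x != y -> edge_set (add_edge g x y) = edge_of x y |: edge_set g.
Proof.
by move=> xy; apply/setP => -[a b]; rewrite !inE edge_ofE // andb_orr orbC.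
Qed.

Lemma edge_set_del g x y : x != y -> edge_set (del_edge g x y) = edge_set g :\ edge_of x y.
Proof.
move=> xy; apply/setP => -[a b]; rewrite !inE edge_ofE //=.
by rewrite /del_edge; case: (a < b)%N; case: (g a b); case: joins.
Qed.

Section Weight.

Variables (F : 'I_n -> 'I_n -> nat) (g : rel 'I_n) (x y : 'I_n).
Hypotheses (FC : forall a b, F a b = F b a) (gs : symmetric g) (xy : x != y).

Lemma F_edge_of : F (edge_of x y).1 (edge_of x y).2 = F x y.
Proof. by rewrite /edge_of; case: ifP. Qed.

Lemma edge_weight_add : ~~ g x y -> edge_weight F (add_edge g x y) = F x y + edge_weight F g.
Proof.
by move=> nxy; rewrite /edge_weight edge_set_add // big_setU1 ?edge_of_in //= F_edge_of.
Qed.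

Lemma edge_weight_del : g x y -> F x y + edge_weight F (del_edge g x y) = edge_weight F g.
Proof.
move=> gxy; rewrite /edge_weight edge_set_del // [RHS](big_setD1 (edge_of x y)) ?edge_of_in //.
by rewrite F_edge_of.
Qed.

End Weight.

Lemma card_edge_set g : #|edge_set g| = edge_weight (fun _ _ => 1) g.
Proof. by rewrite /edge_weight sum1_card. Qed.

Lemma add_edge_sym g x y : symmetric g -> symmetric (add_edge g x y).
Proof. by move=> gs a b; rewrite /add_edge gs joinsC. Qed.

Lemma del_edge_sym g x y : symmetric g -> symmetric (del_edge g x y).
Proof. by move=> gs a b; rewrite /del_edge gs joinsC. Qed.

Lemma add_edge_irr g x y : x != y -> irreflexive g -> irreflexive (add_edge g x y).
Proof. by move=> xy gi a; rewrite /add_edge gi joins_irr. Qed.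

Lemma del_edge_irr g x y : irreflexive g -> irreflexive (del_edge g x y).
Proof. by move=> gi a; rewrite /del_edge gi. Qed.

Lemma sum_deg g : symmetric g -> irreflexive g -> \sum_v deg g v = 2 * #|edge_set g|.
Proof.
move=> gs gi; pose h v u := ((v < u)%N && g v u : nat).
have sum_h : \sum_v \sum_u h v u = #|edge_set g|.
  rewrite pair_big -sum1_card [RHS]big_mkcond; apply: eq_bigr => -[a b] _.
  by rewrite inE /h /=; case: (_ && _).
have deg_h v : deg g v = \sum_u (h v u + h u v).
  rewrite deg_sum; apply: eq_bigr => u _; rewrite /h (gs u v).
  by case: ltngtP => [||/val_inj->]; rewrite ?addn0 ?gi.
under eq_bigr do rewrite deg_h big_split.
by rewrite big_split /= [X in _ + X]exchange_big sum_h addnn mul2n.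
Qed.

Lemma connected_card_edge_set g : symmetric g -> (forall u v, connect g u v) ->
  n.-1 <= #|edge_set g|.
Proof.
move=> gs gc; case: (posnP n) => [n0|n_gt0]; first by have -> : n.-1 = 0 by rewrite n0.
pose r := Ordinal n_gt0.
have exP v : exists k, [exists t : k.-tuple 'I_n, path g v t && (last v t == r)].
  have /connectP[p gp rE] := gc v r; exists (size p).
  by apply/existsP; exists (in_tuple p); rewrite /= gp -rE eqxx.
pose dist v := ex_minn (exP v).
have closer v : v != r -> exists2 y, g v y & dist y < dist v.
  move=> vr; rewrite /dist; case: ex_minnP => d /existsP[[[|y t] /= sz_t]].
    by move=> /eqP vr'; rewrite vr' eqxx in vr.
  move=> /andP[/andP[gvy gt] last_t] _; exists y => //.
  case: ex_minnP => m _ min_m; have sz_t' : size t == d.-1 by move/eqP: sz_t => <-.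
  have : m <= d.-1 by apply: min_m; apply/existsP; exists (Tuple sz_t'); rewrite /= gt.
  by move/eqP: sz_t => <- /=; lia.
(* Sending v != r to the edge towards a neighbour closer to r is injective. *)
pose par v := odflt v [pick y | g v y && (dist y < dist v)].
have parP v : v != r -> g v (par v) && (dist (par v) < dist v).
  move=> vr; rewrite /par; case: pickP => [y -> //|none].
  by have [y gvy lt] := closer v vr; move: (none y); rewrite gvy lt.
have sub : [set edge_of v (par v) | v in [set~ r]] \subset edge_set g.
  apply/subsetP => e /imsetP[v]; rewrite in_setC1 => vr ->.
  have /andP[gv lt] := parP v vr; rewrite edge_of_in //.
  by apply: contraTneq lt => <-; rewrite ltnn.
have inj : {in [set~ r] &, injective (fun v => edge_of v (par v))}.
  move=> v v'; rewrite !inE => vr vr'.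
  have /andP[_ lt] := parP v vr; have /andP[_ lt'] := parP v' vr'.
  case/edge_ofP => [[] // | [e1 e2]]; exfalso.
  by rewrite e2 in lt; rewrite -e1 in lt'; lia.
rewrite -{1}(card_ord n) -(cardsC1 r) -(card_in_imset inj); exact: subset_leq_card.
Qed.

Lemma nbrsE g v (A : {set 'I_n}) : {subset A <= g v} -> deg g v <= #|A| ->
  forall u, g v u = (u \in A).
Proof.
move=> sA dA u; suff -> : A = [set u | g v u] by rewrite inE.
by apply/eqP; rewrite eqEcard dA andbT; apply/subsetP => a /sA; rewrite inE.
Qed.

Lemma tree_no_triangle g x y z : is_tree g -> g x y -> g y z -> x != z -> ~~ g x z.
Proof.
case=> -[gs gi] gc gE gxy gyz xz; apply/negP => gxz.
have xy : x != y by apply: contraTneq gxy => ->; rewrite gi.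
have yz : y != z by apply: contraTneq gyz => ->; rewrite gi.
pose g' := del_edge g x z; have g's : symmetric g' := del_edge_sym x z gs.
have g'xy : g' x y by rewrite /g' /del_edge gxy /joins eqxx (negbTE xz) (negbTE yz).
have g'yz : g' y z by rewrite /g' /del_edge gyz /joins (eq_sym y) (negbTE xy) (negbTE yz).
have g'_sub : subrel g (connect g').
  move=> a b gab; case J: (joins x z a b); last by rewrite connect1 // /g' /del_edge gab J.
  have cxz : connect g' x z := connect_trans (connect1 g'xy) (connect1 g'yz).
  by case/orP: J => /andP[/eqP-> /eqP->] //; rewrite (sym_connect_sym g's).
have := connected_card_edge_set g's (fun u v => connect_sub g'_sub (gc u v)).
have := edge_weight_del (F := fun _ _ => 1) (fun _ _ => erefl) gs xz gxz.
by rewrite -!card_edge_set gE -/g'; lia.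
Qed.

Lemma tree_has_leaf g x y : is_tree g -> g x y -> exists l, deg g l = 1.
Proof.
case=> -[gs gi] gc gE gxy.
have [l deg_l] : exists l, deg g l < 2.
  case: (pickP (fun l => deg g l < 2)) => [l dl | none]; first by exists l.
  have : \sum_(v : 'I_n) 2 <= \sum_v deg g v by apply: leq_sum => v _; rewrite leqNgt none.
  by rewrite sum_deg // gE sum_nat_const card_ord; have := ltn_ord x; lia.
have [c glc] : exists c, g l c.
  have /connectP[[|c p] /= gp lE] := gc l x; first by exists y; rewrite -lE.
  by exists c; case/andP: gp.
by exists l; apply/eqP; rewrite eqn_leq -ltnS deg_l; apply/card_gt0P; exists c; rewrite inE.
Qed.

Lemma leaf_nbr_deg g l w z : symmetric g -> (forall u v, connect g u v) ->
  g l w -> deg g l = 1 -> z != l -> z != w -> 1 < deg g w.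
Proof.
move=> gs gc glw dl zl zw; rewrite ltnNge; apply/negP => dw.
have nl u : g l u = (u == w).
  by rewrite (@nbrsE g l [set w]) ?inE ?cards1 ?dl // => v; rewrite inE => /eqP->.
have nw u : g w u = (u == l).
  by rewrite (@nbrsE g w [set l]) ?inE ?cards1 // => v; rewrite inE => /eqP->; rewrite unfold_in gs.
pose A := [pred u | (u == l) || (u == w)].
have A_nbr a b : g a b -> a \in A -> b \in A.
  by move=> gab /orP[]/eqP ea; move: gab; rewrite ea ?nl ?nw => /eqP->; rewrite !inE eqxx ?orbT.
have A_closed : closed g A by move=> a b gab; apply/idP/idP; apply: A_nbr; rewrite // gs.
by have := closed_connect A_closed (gc l z); rewrite !inE eqxx (negbTE zl) (negbTE zw).
Qed.

Section Suppress.

Variables (g : rel 'I_n) (x v y : 'I_n).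
Hypotheses (gs : symmetric g) (gi : irreflexive g) (xy : x != y) (nxy : ~~ g x y)
  (nbr_v : forall u, g v u = (u == x) || (u == y)).

Definition suppress := add_edge (del_edge (del_edge g x v) v y) x y.

Let gvx : g v x. Proof. by rewrite nbr_v eqxx. Qed.
Let gvy : g v y. Proof. by rewrite nbr_v eqxx orbT. Qed.
Let gxv : g x v. Proof. by rewrite gs. Qed.
Let xv : x != v. Proof. by apply: contraTneq gvx => ->; rewrite gi. Qed.
Let vy : v != y. Proof. by apply: contraTneq gvy => ->; rewrite gi. Qed.

Let del_sym : symmetric (del_edge (del_edge g x v) v y).
Proof. exact/del_edge_sym/del_edge_sym. Qed.
Let del_vy : del_edge g x v v y.
Proof. by rewrite /del_edge gvy /joins eqxx (eq_sym v x) (negbTE xv) (eq_sym y x) (negbTE xy). Qed.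
Let del_xy : ~~ del_edge (del_edge g x v) v y x y.
Proof. by rewrite /del_edge (negbTE nxy). Qed.

Lemma suppress_sym : symmetric suppress.
Proof. exact/add_edge_sym. Qed.

Lemma suppress_irr : irreflexive suppress.
Proof. exact/add_edge_irr/del_edge_irr/del_edge_irr. Qed.

Lemma suppress_isolated u : suppress v u = false.
Proof.
rewrite /suppress /add_edge /del_edge /joins nbr_v eqxx (eq_sym v x) (negbTE xv) (negbTE vy) /=.
by case: (u == x); case: (u == y).
Qed.

Lemma suppress_xy : suppress x y.
Proof. by rewrite /suppress /add_edge /joins !eqxx orbT. Qed.

Lemma suppress_edge : {in predC1 v &, subrel g suppress}.
Proof.
move=> a b; rewrite !inE => av bv gab.
by rewrite /suppress /add_edge /del_edge /joins gab (negbTE av) (negbTE bv) !andbF.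
Qed.

Lemma deg_suppress u : deg suppress u + 2 * (u == v) = deg g u.
Proof.
have := deg_del_edge u gs xv gxv.
have := deg_del_edge u (del_edge_sym x v gs) vy del_vy.
have := deg_add_edge u del_sym xy del_xy.
rewrite -/suppress; lia.
Qed.

Lemma edge_weight_suppress F : (forall a b, F a b = F b a) ->
  edge_weight F suppress + F x v + F v y = edge_weight F g + F x y.
Proof.
move=> FC; have := edge_weight_del FC gs xv gxv.
have := edge_weight_del FC (del_edge_sym x v gs) vy del_vy.
have := edge_weight_add FC del_sym xy del_xy.
rewrite -/suppress; lia.
Qed.

Lemma suppress_connected : (forall a b, connect g a b) ->
  {in predC1 v &, forall a b, connect suppress a b}.
Proof.
move=> gc; have to_x a : a != v -> connect suppress a x.
  move=> av; have [c] := connect_avoid_vertex suppress_edge (gc a v) av.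
  rewrite gs nbr_v => /orP[]/eqP-> // cay.
  by apply: connect_trans cay (connect1 _); rewrite suppress_sym suppress_xy.
move=> a b; rewrite !inE => av bv; apply: connect_trans (to_x a av) _.
by rewrite (sym_connect_sym suppress_sym); exact: to_x.
Qed.

End Suppress.

Section Subdivide.

Variables (g : rel 'I_n) (w l v : 'I_n).
Hypotheses (gs : symmetric g) (gi : irreflexive g) (gwl : g w l)
  (v_isolated : forall u, g v u = false).

Definition subdivide := add_edge (add_edge (del_edge g w l) w v) v l.

Let wl : w != l. Proof. by apply: contraTneq gwl => ->; rewrite gi. Qed.
Let wv : w != v. Proof. by apply: contraTneq gwl => ->; rewrite v_isolated. Qed.
Let vl : v != l. Proof. by apply: contraTneq gwl => <-; rewrite gs v_isolated. Qed.

Let del_sym : symmetric (del_edge g w l). Proof. exact: del_edge_sym. Qed.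
Let add_sym : symmetric (add_edge (del_edge g w l) w v). Proof. exact/add_edge_sym. Qed.
Let del_wv : ~~ del_edge g w l w v. Proof. by rewrite /del_edge gs v_isolated. Qed.
Let add_vl : ~~ add_edge (del_edge g w l) w v v l.
Proof.
rewrite /add_edge /del_edge v_isolated /joins (eq_sym v w) (negbTE wv) /=.
by rewrite eqxx eq_sym (negbTE wl).
Qed.

Lemma subdivide_sym : symmetric subdivide.
Proof. exact/add_edge_sym. Qed.

Lemma subdivide_irr : irreflexive subdivide.
Proof. exact/add_edge_irr/add_edge_irr/del_edge_irr. Qed.

Lemma subdivide_edge a b : g a b -> ~~ joins w l a b -> subdivide a b.
Proof. by move=> gab jab; rewrite /subdivide /add_edge /del_edge gab jab. Qed.

Lemma subdivide_wv : subdivide w v.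
Proof. by rewrite /subdivide /add_edge /joins !eqxx !orbT. Qed.

Lemma subdivide_vl : subdivide v l.
Proof. by rewrite /subdivide /add_edge /joins !eqxx !orbT. Qed.

Lemma deg_subdivide u : deg subdivide u = deg g u + 2 * (u == v).
Proof.
have := deg_del_edge u gs wl gwl.
have := deg_add_edge u del_sym wv del_wv.
have := deg_add_edge u add_sym vl add_vl.
rewrite -/subdivide; lia.
Qed.

Lemma edge_weight_subdivide F : (forall a b, F a b = F b a) ->
  edge_weight F subdivide + F w l = edge_weight F g + F w v + F v l.
Proof.
move=> FC; have := edge_weight_del FC gs wl gwl.
have := edge_weight_add FC del_sym wv del_wv.
have := edge_weight_add FC add_sym vl add_vl.
rewrite -/subdivide; lia.
Qed.

Lemma subdivide_connected : {in predC1 v &, forall a b, connect g a b} ->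
  forall a b, connect subdivide a b.
Proof.
move=> gc; have g_sub : subrel g (connect subdivide).
  move=> a b gab; case J: (joins w l a b); last by rewrite connect1 ?subdivide_edge ?J.
  have cwl : connect subdivide w l.
    exact: connect_trans (connect1 subdivide_wv) (connect1 subdivide_vl).
  by case/orP: J => /andP[/eqP-> /eqP->] //; rewrite (sym_connect_sym subdivide_sym).
have to_w a : connect subdivide a w.
  have [->|av] := eqVneq a v; first by rewrite connect1 // subdivide_sym subdivide_wv.
  by apply: connect_sub g_sub _ _ (gc _ _ _ _); rewrite !inE // eq_sym.
move=> a b; apply: connect_trans (to_w a) _.
by rewrite (sym_connect_sym subdivide_sym).
Qed.

End Subdivide.

Section Relocate.

Variables (T : rel 'I_n) (x u y w l : 'I_n).
Hypotheses (Ttree : is_tree T) (xy : x != y) (nTxy : ~~ T x y)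
  (nbr_u : forall z, T u z = (z == x) || (z == y)) (Twl : T w l) (wu : w != u) (lu : l != u).

Definition relocate := subdivide (suppress T x u y) w l u.

Let Ts : symmetric T. Proof. by case: Ttree => -[]. Qed.
Let Ti : irreflexive T. Proof. by case: Ttree => -[]. Qed.
Let Tc : forall a b, connect T a b. Proof. by case: Ttree. Qed.

Let S := suppress T x u y.
Let S_sym : symmetric S. Proof. exact: suppress_sym. Qed.
Let S_irr : irreflexive S. Proof. exact: suppress_irr. Qed.
Let S_isolated z : S u z = false. Proof. exact: suppress_isolated. Qed.
Let S_wl : S w l. Proof. by apply: suppress_edge; rewrite ?inE. Qed.

Lemma deg_relocate z : deg relocate z = deg T z.
Proof. by rewrite deg_subdivide //; apply: deg_suppress. Qed.

Lemma relocate_tree : is_tree relocate.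
Proof.
split; first by split; [apply: subdivide_sym | apply: subdivide_irr].
  by apply: subdivide_connected => //; apply: suppress_connected.
have := edge_weight_subdivide (F := fun _ _ => 1) S_sym S_irr S_wl S_isolated (fun _ _ => erefl).
have := edge_weight_suppress (F := fun _ _ => 1) Ts Ti xy nTxy nbr_u (fun _ _ => erefl).
by case: Ttree => _ _; rewrite -!card_edge_set -/S -/relocate; lia.
Qed.

Lemma M2_relocate :
  M2 relocate + deg T x * deg T u + deg T u * deg T y + deg T w * deg T l =
  M2 T + deg T x * deg T y + deg T w * deg T u + deg T u * deg T l.
Proof.
pose F a b := deg T a * deg T b; have FC a b : F a b = F b a by rewrite /F mulnC.
have -> : M2 relocate = edge_weight F relocate.
  by apply: eq_bigr => e _; rewrite !deg_relocate.
have := edge_weight_subdivide S_sym S_irr S_wl S_isolated FC.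
have := edge_weight_suppress Ts Ti xy nTxy nbr_u FC.
have -> : M2 T = edge_weight F T by [].
by rewrite -/S -/relocate /F; lia.
Qed.

Lemma relocate_edge : {in [pred z | (z != u) && (z != l)] &, subrel T relocate}.
Proof.
move=> a b /andP[au al] /andP[bu bl] Tab; apply: subdivide_edge.
  by apply: suppress_edge; rewrite ?inE.
by rewrite /joins (negbTE al) (negbTE bl) !andbF.
Qed.

Lemma relocate_xy : x != l -> y != l -> relocate x y.
Proof.
move=> xl yl; apply: subdivide_edge; first exact: suppress_xy.
by rewrite /joins (negbTE xl) (negbTE yl) !andbF.
Qed.

End Relocate.

End Graphs.

Lemma M2_gain (dx dy dw m m' : nat) : 2 <= dx -> 2 <= dy -> 2 <= dw ->
  m' + dx * 2 + 2 * dy + dw * 1 = m + dx * dy + dw * 2 + 2 * 1 ->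
  m + (dx - 2) * (dy - 2) <= m'.
Proof. by move=> /subnKC <- /subnKC <-; rewrite !addKn; lia. Qed.

Lemma relocate_CTstar n b (T : rel 'I_n) x u y w l :
  in_CTstar b T -> x != y -> ~~ T x y -> (forall z, T u z = (z == x) || (z == y)) ->
  T w l -> w != u -> l != u -> in_CTstar b (relocate T x u y w l).
Proof.
case=> Ttree Tchem Tb xy nTxy nbr_u Twl wu lu.
split; first exact: relocate_tree.
  by move=> z; rewrite deg_relocate.
by rewrite -Tb; apply: eq_card => z; rewrite !inE /branching deg_relocate.
Qed.

Lemma internal_path_relocate n b (T : rel 'I_n) x u y s :
  in_CTstar b T -> internal_path T x [:: u, y & s] ->
  exists T' : rel 'I_n,
    [/\ in_CTstar b T', M2 T <= M2 T', s = [::] -> M2 T < M2 T'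
       & s != [::] -> internal_path T' x (y :: s)].
Proof.
move=> CT [_ /= /and3P[Txu Tuy Tpath] uniq_p /andP[bx b_last] deg2].
have [Ttree _ _] := CT; case: (Ttree) => -[Ts _] Tc _.
case/and4P: uniq_p => x_p u_ys y_s uniq_s.
have /norP[_ /norP[xy x_s]] : ~~ [|| x == u, x == y | x \in s] by rewrite -!in_cons.
case/andP: deg2 => /eqP du deg2.
have deg_path z : z \in y :: s -> 1 < deg T z.
  rewrite lastI mem_rcons inE => /predU1P[->|]; first exact: ltnW.
  by move: deg2; rewrite lastI -cats1 take_size_cat ?size_belast // => /allP dz /dz /eqP->.
have dy := deg_path y (mem_head _ _).
have nbr_u z : T u z = (z == x) || (z == y).
  rewrite (@nbrsE _ T u [set x; y]) ?inE ?cards2 ?xy ?du // => v.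
  by rewrite !inE => /orP[]/eqP->; rewrite unfold_in // Ts.
have nTxy := tree_no_triangle Ttree Txu Tuy xy.
have [l dl] := tree_has_leaf Ttree Txu.
have /card_gt0P[w] : 0 < deg T l by rewrite dl.
rewrite inE => Tlw.
have not_l z : 1 < deg T z -> z != l by apply: contraTneq => ->; rewrite dl.
have lu : l != u by rewrite eq_sym not_l ?du.
have wu : w != u.
  by apply: contraTneq Tlw => ->; rewrite Ts nbr_u negb_or !(eq_sym l) !not_l // (ltnW bx).
have dw : 1 < deg T w by apply: (leaf_nbr_deg Ts Tc Tlw dl (z := u)); rewrite // eq_sym.
exists (relocate T x u y w l).
have Twl : T w l by rewrite Ts.
have := M2_relocate Ttree xy nTxy nbr_u Twl wu lu.
rewrite du dl => /(M2_gain (ltnW bx) dy dw) gain.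
have avoid_ul : all [pred z | (z != u) && (z != l)] (y :: s).
  by apply/allP => z zs; rewrite /= not_l ?deg_path // andbT; apply: contraNneq u_ys => <-.
split; first exact: relocate_CTstar.
- exact: leq_trans (leq_addr _ _) gain.
- move=> s0; apply: leq_trans gain; rewrite -addn1 leq_add2l muln_gt0 !subn_gt0.
  by apply/andP; split; [exact: bx | move: b_last; rewrite s0].
move=> _; split => //=.
- rewrite relocate_xy ?not_l ?(ltnW bx) //=.
  by apply: (sub_in_path _ avoid_ul Tpath); apply: relocate_edge.
- by rewrite inE negb_or xy x_s y_s.
- by rewrite /branching !deg_relocate //; apply/andP.
- by under eq_all do rewrite deg_relocate //.
Qed.

Lemma long_internal_path_not_max n b (T : rel 'I_n) x u y s :
  in_CTstar b T -> internal_path T x [:: u, y & s] ->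
  exists2 T' : rel 'I_n, in_CTstar b T' & M2 T < M2 T'.
Proof.
elim: s T u y => [|z s IH] T u y CT ip;
  have [T' [CT' le_M2 lt_M2 ip']] := internal_path_relocate CT ip.
  by exists T'; last exact: lt_M2.
have [T'' CT'' lt_M2'] := IH T' y z CT' (ip' isT).
by exists T''; last exact: leq_ltn_trans le_M2 lt_M2'.
Qed.

Theorem lemma10 (n b : nat) (T : rel 'I_n) :
  (1 <= b)%N -> (2 * b + 2 < n)%N ->
  in_CTstar b T ->
  (forall T' : rel 'I_n, in_CTstar b T' -> (M2 T' <= M2 T)%N) ->
  forall (x : 'I_n) (p : seq 'I_n), internal_path T x p -> (size p <= 1)%N.
Proof.
move=> _ _ CT T_max x [|u [|y s]] // ip.
have [T' CT' lt_M2] := long_internal_path_not_max CT ip.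
by have := T_max T' CT'; rewrite leqNgt lt_M2.
Qed.
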